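(* A $k$-layer partially input convex neural network (PICNN), as defined below, can represent any $k$-layer fully input convex neural network (FICNN), and any purely feedforward network with $k$ layers (the latter viewed as the energy function $(x,y)\mapsto \hat f(x;\theta)^T y$).
   Context: A $k$-layer FICNN over $y\in\mathbb{R}^p$ is $f(y;\theta)=z_k$ where $z_{i+1} = g_i(W^{(z)}_i z_i + W^{(y)}_i y + b_i)$ for $i=0,\ldots,k-1$, with $z_0 \equiv 0$, $W^{(z)}_0\equiv 0$, $W^{(z)}_{1:k-1}$ entrywise non-negative and $g_i$ convex non-decreasing activations. A $k$-layer PICNN over pairs $(x,y)$ is $f(x,y;\theta)=z_k$ defined by $u_0 = x$, $$u_{i+1} = \tilde g_i(\tilde W_i u_i + \tilde b_i),$$ $$z_{i+1} = g_i\Big( W^{(z)}_i\big(z_i \circ [W^{(zu)}_i u_i + b^{(z)}_i]_+\big) + W^{(y)}_i\big(y\circ(W^{(yu)}_i u_i + b^{(y)}_i)\big) + W^{(u)}_i u_i + b_i\Big),$$ for $i=0,\ldots,k-1$, where $\circ$ is the elementwise (Hadamard) product, $[\cdot]_+ = \max(\cdot,0)$ elementwise, only the $W^{(z)}_i$ are required to be entrywise non-negative, $g_i$ are convex non-decreasing activations, and $\tilde g_i$ are arbitrary activations. A purely feedforward network $\hat f: \mathcal{X}\to\mathcal{Y}$ with $k$ layers is identified with the energy function $f(x,y) = \hat f(x;\theta)^T y$. ''Can represent'' means there exist PICNN parameters such that the PICNN function coincides with the given function. *)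

From HB Require Import structures.
From mathcomp Require Import all_boot all_order all_algebra.
From mathcomp Require Import reals.
Set Implicit Arguments. Unset Strict Implicit. Unset Printing Implicit Defensive.
Import Order.TTheory GRing.Theory Num.Theory.
Local Open Scope ring_scope.

Section Nets.
Variable R : realType.

Definition act (g : R -> R) {m} (v : 'cV[R]_m) : 'cV[R]_m := map_mx g v.
Definition had {m} (u v : 'cV[R]_m) : 'cV[R]_m := \col_i (u i 0 * v i 0).
Definition pos_part {m} (v : 'cV[R]_m) : 'cV[R]_m := map_mx (fun t => Num.max t 0) v.

Definition nonneg_mx {m n} (M : 'M[R]_(m, n)) : Prop := forall i j, 0 <= M i j.
Definition convex_fun (g : R -> R) : Prop :=
  forall a b t, 0 <= t <= 1 -> g (t * a + (1 - t) * b) <= t * g a + (1 - t) * g b.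
Definition nondecreasing_fun (g : R -> R) : Prop := forall a b, a <= b -> g a <= g b.

(** Layer widths: [zd zw i] is the width of z_i (z_0 = 0 has width 0, so
    W^{(z)}_0 z_0 = 0 automatically); [ud d uw i] the width of u_i, u_0 = x. *)
Definition zd (zw : nat -> nat) (i : nat) : nat := if i is j.+1 then zw j else 0%N.
Definition ud (d : nat) (uw : nat -> nat) (i : nat) : nat :=
  if i is j.+1 then uw j else d.

Record ficnn (p : nat) (zw : nat -> nat) := Ficnn {
  fWz : forall i, 'M[R]_(zw i, zd zw i);
  fWy : forall i, 'M[R]_(zw i, p);
  fb  : forall i, 'cV[R]_(zw i);
  fg  : nat -> R -> R }.

Fixpoint ficnn_z p zw (F : ficnn p zw) (y : 'cV[R]_p) (i : nat) : 'cV[R]_(zd zw i) :=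
  match i return 'cV[R]_(zd zw i) with
  | 0 => 0
  | j.+1 => act (fg F j) (fWz F j *m ficnn_z F y j + fWy F j *m y + fb F j)
  end.

Definition ficnn_eval p zw (F : ficnn p zw) (k : nat) (y : 'cV[R]_p) := ficnn_z F y k.

Definition ficnn_ok p zw (F : ficnn p zw) (k : nat) : Prop :=
  (forall i, (0 < i < k)%N -> nonneg_mx (fWz F i)) /\
  (forall i, (i < k)%N -> convex_fun (fg F i) /\ nondecreasing_fun (fg F i)).

Record picnn (d p : nat) (uw zw : nat -> nat) := Picnn {
  pWt  : forall i, 'M[R]_(uw i, ud d uw i);
  pbt  : forall i, 'cV[R]_(uw i);
  pgt  : nat -> R -> R;
  pWz  : forall i, 'M[R]_(zw i, zd zw i);
  pWzu : forall i, 'M[R]_(zd zw i, ud d uw i);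
  pbz  : forall i, 'cV[R]_(zd zw i);
  pWy  : forall i, 'M[R]_(zw i, p);
  pWyu : forall i, 'M[R]_(p, ud d uw i);
  pby  : nat -> 'cV[R]_p;
  pWu  : forall i, 'M[R]_(zw i, ud d uw i);
  pb   : forall i, 'cV[R]_(zw i);
  pg   : nat -> R -> R }.

Fixpoint picnn_u d p uw zw (N : picnn d p uw zw) (x : 'cV[R]_d) (i : nat)
  : 'cV[R]_(ud d uw i) :=
  match i return 'cV[R]_(ud d uw i) with
  | 0 => x
  | j.+1 => act (pgt N j) (pWt N j *m picnn_u N x j + pbt N j)
  end.

Fixpoint picnn_z d p uw zw (N : picnn d p uw zw) (x : 'cV[R]_d) (y : 'cV[R]_p)
  (i : nat) : 'cV[R]_(zd zw i) :=
  match i return 'cV[R]_(zd zw i) with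
  | 0 => 0
  | j.+1 =>
    let u := picnn_u N x j in
    act (pg N j)
      (pWz N j *m had (picnn_z N x y j) (pos_part (pWzu N j *m u + pbz N j))
       + pWy N j *m had y (pWyu N j *m u + pby N j)
       + pWu N j *m u + pb N j)
  end.

Definition picnn_eval d p uw zw (N : picnn d p uw zw) (k : nat) x y := picnn_z N x y k.

Definition picnn_ok d p uw zw (N : picnn d p uw zw) (k : nat) : Prop :=
  (forall i, (i < k)%N -> nonneg_mx (pWz N i)) /\
  (forall i, (i < k)%N -> convex_fun (pg N i) /\ nondecreasing_fun (pg N i)).

(** ---- Purely feedforward network hat f : R^d -> R^p with n.+1 layers:
    hidden layers u_{i+1} = tilde g_i (W_i u_i + b_i) for i < n, u_0 = x,
    and an affine output layer hat f(x) = W_n u_n + b_n. ---- *)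
Record ffnet (d p : nat) (uw : nat -> nat) (n : nat) := Ffnet {
  hW : forall i, 'M[R]_(uw i, ud d uw i);
  hb : forall i, 'cV[R]_(uw i);
  hg : nat -> R -> R;
  hWout : 'M[R]_(p, ud d uw n);
  hbout : 'cV[R]_p }.

Fixpoint ffnet_u d p uw n (G : ffnet d p uw n) (x : 'cV[R]_d) (i : nat)
  : 'cV[R]_(ud d uw i) :=
  match i return 'cV[R]_(ud d uw i) with
  | 0 => x
  | j.+1 => act (hg G j) (hW G j *m ffnet_u G x j + hb G j)
  end.

Definition ffnet_eval d p uw n (G : ffnet d p uw n) (x : 'cV[R]_d) : 'cV[R]_p :=
  hWout G *m ffnet_u G x n + hbout G.

End Nets.

From HB Require Import structures.
From mathcomp Require Import all_boot all_order all_algebra.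
From mathcomp Require Import reals.
Import Order.TTheory GRing.Theory Num.Theory.
Local Open Scope ring_scope.

(* A FICNN is a PICNN whose x-pathway is switched off: with W^{(zu)} = W^{(yu)} = 0
   and b^{(z)} = b^{(y)} = 1 both Hadamard gates are the identity, and W^{(u)} = 0.
   A feedforward network hat f becomes a PICNN with one-dimensional z-layers: the
   u-pathway runs hat f's hidden layers, W^{(z)} = 0 makes every z-layer forget its
   input, and in the last layer W^{(y)} = 1^T, W^{(yu)} = W_out, b^{(y)} = b_out
   with identity activation yield 1^T (y o hat f(x)) = hat f(x)^T y. *)

Definition at_layer {T : nat -> Type} (zero : forall i, T i) {n : nat} (a : T n)
  (i : nat) : T i :=
  if decP (@eqnP n i) is left e then ecast j (T j) e a else zero i.

Lemma at_layer_id {T : nat -> Type} (zero : forall i, T i) n (a : T n) :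
  at_layer zero a n = a.
Proof. by rewrite /at_layer; case: decP => [e|//]; rewrite (eq_axiomK e). Qed.

Section Nets.
Variable R : realType.

Lemma had_const1 m (v : 'cV[R]_m) : had v (const_mx 1) = v.
Proof. by apply/matrixP => i j; rewrite !mxE mulr1 (ord1 j). Qed.

Lemma pos_part_const1 m : pos_part (const_mx 1 : 'cV[R]_m) = const_mx 1.
Proof. by apply/matrixP => i j; rewrite !mxE /Num.max ltr10. Qed.

Lemma ones_mul_had m (y v : 'cV[R]_m) : const_mx 1 *m had y v = v^T *m y.
Proof.
apply/matrixP => i j; rewrite !mxE; apply: eq_bigr => k _.
by rewrite !mxE (ord1 i) (ord1 j) mul1r mulrC.
Qed.

Lemma act_id m (v : 'cV[R]_m) : act id v = v.
Proof. exact: map_mx_id. Qed.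

Lemma nonneg_mx0 m n : nonneg_mx (0 : 'M[R]_(m, n)).
Proof. by move=> i j; rewrite mxE. Qed.

Lemma nonneg_mx_0col m (M : 'M[R]_(m, 0)) : nonneg_mx M.
Proof. by move=> i []. Qed.

Lemma convex_fun_id : convex_fun (R := R) id.
Proof. by move=> a b t _; rewrite lexx. Qed.

Lemma nondecreasing_fun_id : nondecreasing_fun (R := R) id.
Proof. by []. Qed.

Section FicnnAsPicnn.
Variables (d p : nat) (zw : nat -> nat) (F : ficnn R p zw).

Definition picnn_of_ficnn : picnn R d p (fun _ => 0%N) zw :=
  Picnn (fun _ => 0) (fun _ => 0) (fun _ => id)
    (fWz F) (fun _ => 0) (fun _ => const_mx 1)
    (fWy F) (fun _ => 0) (fun _ => const_mx 1)
    (fun _ => 0) (fb F) (fg F).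

Lemma picnn_of_ficnn_ok k : ficnn_ok F k -> picnn_ok picnn_of_ficnn k.
Proof.
move=> [Wz_ge0 g_ok]; split=> // -[|i] lt_ik; first exact: nonneg_mx_0col.
exact: Wz_ge0.
Qed.

Lemma picnn_of_ficnn_z x y i : picnn_z picnn_of_ficnn x y i = ficnn_z F y i.
Proof.
elim: i => [//|i IHi] /=.
by rewrite !mul0mx !add0r pos_part_const1 !had_const1 IHi addr0.
Qed.

End FicnnAsPicnn.

Section FfnetAsPicnn.
Variables (d p : nat) (uw : nat -> nat) (n : nat) (G : ffnet R d p uw n).

Definition picnn_of_ffnet : picnn R d p uw (fun _ => 1%N) :=
  Picnn (hW G) (hb G) (hg G)
    (fun _ => 0) (fun _ => 0) (fun _ => 0)
    (fun _ => const_mx 1) (at_layer (fun i => 0 : 'M_(p, ud d uw i)) (hWout G)) (fun _ => hbout G)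
    (fun _ => 0) (fun _ => 0) (fun _ => id).

Lemma picnn_of_ffnet_ok k : picnn_ok picnn_of_ffnet k.
Proof.
split=> i _; first exact: nonneg_mx0.
by split; [exact: convex_fun_id | exact: nondecreasing_fun_id].
Qed.

Lemma picnn_of_ffnet_u x i : picnn_u picnn_of_ffnet x i = ffnet_u G x i.
Proof. by elim: i => [//|i IHi] /=; rewrite IHi. Qed.

Lemma picnn_of_ffnet_eval x y :
  picnn_eval picnn_of_ffnet n.+1 x y = (ffnet_eval G x)^T *m y.
Proof.
rewrite /picnn_eval /= act_id !mul0mx add0r !addr0.
by rewrite picnn_of_ffnet_u at_layer_id ones_mul_had.
Qed.

End FfnetAsPicnn.

End Nets.

Arguments picnn_of_ficnn {R} d {p zw} F.
Arguments picnn_of_ffnet {R d p uw n} G.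

Theorem proposition2 (R : realType) (d p n : nat) :
  (forall (zw : nat -> nat) (F : ficnn R p zw),
     ficnn_ok F n.+1 ->
     exists (uw : nat -> nat) (N : picnn R d p uw zw),
       picnn_ok N n.+1 /\
       forall (x : 'cV[R]_d) (y : 'cV[R]_p),
         picnn_eval N n.+1 x y = ficnn_eval F n.+1 y)
  /\
  (forall (uw : nat -> nat) (G : ffnet R d p uw n),
     exists N : picnn R d p uw (fun _ => 1%N),
       picnn_ok N n.+1 /\
       forall (x : 'cV[R]_d) (y : 'cV[R]_p),
         picnn_eval N n.+1 x y = (ffnet_eval G x)^T *m y).
Proof.
split.
- move=> zw F F_ok; exists (fun _ => 0%N), (picnn_of_ficnn d F).
  split; first exact: picnn_of_ficnn_ok.
  by move=> x y; apply: picnn_of_ficnn_z.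
- move=> uw G; exists (picnn_of_ffnet G).
  split; first exact: picnn_of_ffnet_ok.
  exact: picnn_of_ffnet_eval.
Qed.
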